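(* Let $\mu>0$. There is $K=K(\mu)$ such that for every integer $k\ge K$ the following holds. There exist a $C^2$ function $f:\mathbb{R}\to\mathbb{R}$ with $f'(0)=0$ and numbers $C=C(\mu,k)\in(0,\tfrac25]$ and $t_0=t_0(\mu,k)$ with $t_0-C>0$, such that: (i) $u_1=\cos(kx)f(t)$ solves $\ddot u_1+\operatorname{div}\!\left[\begin{pmatrix}\frac{\mu}{2k^2}&0\\0&1+\frac{\mu}{4k^2}\end{pmatrix}\nabla u_1\right]=-\mu u_1$ for $t\le t_0-C$; (ii) with $u_2=\cos(kx)e^{-k(t-t_0)}$, which solves $\ddot u_2+\operatorname{div}\!\left[\begin{pmatrix}1+\frac{\mu}{k^2}&0\\0&1+\frac{\mu}{4k^2}\end{pmatrix}\nabla u_2\right]=-\mu u_2$, there is a transformation of $u_1$ into $u_2$ within $\mathbb{T}^2\times[t_0-C,t_0]$: a $C^2$ function $u$ and a $C^1$ real $2\times 2$ matrix function $A$ in the regularity class $R(5k^2/\mu,10)$ with $\ddot u+\operatorname{div}(A\nabla u)=-\mu u$ on $\mathbb{T}^2\times\mathbb{R}$, such that $u=u_1$ and $A=\begin{pmatrix}\frac{\mu}{2k^2}&0\\0&1+\frac{\mu}{4k^2}\end{pmatrix}$ for $t\le t_0-C$, and $u=u_2$, $A=\begin{pmatrix}1+\frac{\mu}{k^2}&0\\0&1+\frac{\mu}{4k^2}\end{pmatrix}$ for $t\ge t_0$.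
   Context: $\mathbb{T}^2=(\mathbb{R}/2\pi\mathbb{Z})^2$ with coordinates $(x,y)$; $t$ the third coordinate. $\ddot u+\operatorname{div}(A\nabla u)$ means $\partial_t^2u+\sum_{i,j\in\{x,y\}}\partial_i(A_{ij}\partial_ju)$. Regularity class $R(\Lambda,C)$: $\Lambda^{-1}|\xi|^2\le\xi^TA\xi\le\Lambda|\xi|^2$ for all $\xi\in\mathbb{R}^2$ at every point, and the entries of $A$ are $C^1$ with all first partial derivatives in $x,y,t$ bounded by $C$ in absolute value. *)

From Stdlib Require Import Reals Lra.
From Coquelicot Require Import Coquelicot.
Open Scope R_scope.

(* Functions on T^2 x R are represented as functions R -> R -> R -> R
   (arguments x, y, t) that are 2*PI-periodic in x and in y. *)
Definition fn3 := R -> R -> R -> R.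

Inductive idx : Type := IX | IY.

Definition dsp (i : idx) (F : fn3) : fn3 :=
  match i with
  | IX => fun x y t => Derive (fun s => F s y t) x
  | IY => fun x y t => Derive (fun s => F x s t) y
  end.

Definition dt (F : fn3) : fn3 := fun x y t => Derive (fun s => F x y s) t.

Definition periodic2 (F : fn3) : Prop :=
  forall x y t, F (x + 2 * PI) y t = F x y t /\ F x (y + 2 * PI) t = F x y t.

Definition cont3 (F : fn3) : Prop :=
  forall x y t,
    continuous (fun p : R * R * R => F (fst (fst p)) (snd (fst p)) (snd p))
               (x, y, t).

Definition partials_exist (F : fn3) : Prop :=
  forall x y t,
    ex_derive (fun s => F s y t) x /\ ex_derive (fun s => F x s t) y /\
    ex_derive (fun s => F x y s) t.

Definition C1_3 (F : fn3) : Prop :=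
  cont3 F /\ partials_exist F /\
  cont3 (dsp IX F) /\ cont3 (dsp IY F) /\ cont3 (dt F).

Definition C2_3 (F : fn3) : Prop :=
  C1_3 F /\ C1_3 (dsp IX F) /\ C1_3 (dsp IY F) /\ C1_3 (dt F).

Definition C2_1 (f : R -> R) : Prop :=
  (forall t, ex_derive_n f 2 t) /\ (forall t, continuity_pt (Derive_n f 2) t).

Definition matfn := idx -> idx -> fn3.

Definition wave_op (A : matfn) (u : fn3) (x y t : R) : R :=
  dt (dt u) x y t
  + dsp IX (fun a b c => A IX IX a b c * dsp IX u a b c) x y t
  + dsp IX (fun a b c => A IX IY a b c * dsp IY u a b c) x y t
  + dsp IY (fun a b c => A IY IX a b c * dsp IX u a b c) x y t
  + dsp IY (fun a b c => A IY IY a b c * dsp IY u a b c) x y t.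

Definition solves_at (mu : R) (A : matfn) (u : fn3) (x y t : R) : Prop :=
  wave_op A u x y t = - mu * u x y t.

Definition quadform (A : matfn) (x y t xi1 xi2 : R) : R :=
  A IX IX x y t * xi1 * xi1 + A IX IY x y t * xi1 * xi2
  + A IY IX x y t * xi2 * xi1 + A IY IY x y t * xi2 * xi2.

Definition reg_class (Lam Cb : R) (A : matfn) : Prop :=
  (forall x y t xi1 xi2,
      / Lam * (xi1 ^ 2 + xi2 ^ 2) <= quadform A x y t xi1 xi2 /\
      quadform A x y t xi1 xi2 <= Lam * (xi1 ^ 2 + xi2 ^ 2)) /\
  (forall i j, C1_3 (A i j)) /\
  (forall i j x y t,
      Rabs (dsp IX (A i j) x y t) <= Cb /\
      Rabs (dsp IY (A i j) x y t) <= Cb /\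
      Rabs (dt (A i j) x y t) <= Cb).

Definition diagmat (a b : R) : matfn :=
  fun i j => fun _ _ _ =>
    match i, j with
    | IX, IX => a
    | IY, IY => b
    | _, _ => 0
    end.

From Stdlib Require Import Reals Lra Psatz FunctionalExtensionality.
From Coquelicot Require Import Coquelicot.
Open Scope R_scope.

(* Both equations are solved by modes [cos (k x) g(t)] in media [diag (a(t), b)], for which
   the equation reduces to [g'' = (k^2 a - mu) g]. So it suffices to build a positive C^2
   function [g] equal to a multiple of [cos (omega t)], [omega^2 = mu / 2], up to a time [tau]
   and to [exp (- k (t - t0))] from [t0] on, and to set [a = (g'' / g + mu) / k^2].
   Writing [g = exp (- int y)] gives [g'' / g = y^2 - y'], so [y] has to move from
   [omega tan (omega t)] to the constant [k] in time at most [2/5], keeping [y^2 - y' >= - omega^2]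
   (ellipticity) and [y''] of size [O(k^2)] (the bound on [a']). This is achieved by the
   autonomous flow [y' = y^2 / (a + b y^2)], whose coefficients are tuned so that it agrees
   with [omega tan (omega t)] to second order where they meet, and which is frozen by a C^2
   time change once [y] reaches [k]. *)

Definition glue (c : R) (f1 f2 : R -> R) (t : R) : R :=
  if Rle_dec t c then f1 t else f2 t.

Lemma glue_left c f1 f2 t : t <= c -> glue c f1 f2 t = f1 t.
Proof. intros H; unfold glue; destruct (Rle_dec t c); [reflexivity | lra]. Qed.

Lemma glue_right c f1 f2 t : c < t -> glue c f1 f2 t = f2 t.
Proof. intros H; unfold glue; destruct (Rle_dec t c); [lra | reflexivity]. Qed.

Lemma glue_locally_left c f1 f2 t :
  t < c -> locally t (fun s => f1 s = glue c f1 f2 s).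
Proof.
  apply (locally_open _ _ (open_lt c)). intros s Hs. symmetry; apply glue_left; lra.
Qed.

Lemma glue_locally_right c f1 f2 t :
  c < t -> locally t (fun s => f2 s = glue c f1 f2 s).
Proof.
  apply (locally_open _ _ (open_gt c)). intros s Hs. symmetry; apply glue_right; lra.
Qed.

Lemma is_derive_glue (c : R) (f1 f2 f1' f2' : R -> R) :
  (forall t, is_derive f1 t (f1' t)) -> (forall t, is_derive f2 t (f2' t)) ->
  f1 c = f2 c -> f1' c = f2' c ->
  forall t, is_derive (glue c f1 f2) t (glue c f1' f2' t).
Proof.
  intros H1 H2 E0 E1 t.
  destruct (Rtotal_order t c) as [Hlt | [-> | Hgt]].
  - rewrite glue_left by lra.
    exact (is_derive_ext_loc _ _ _ _ (glue_locally_left c f1 f2 t Hlt) (H1 t)).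
  - rewrite glue_left by lra.
    apply is_derive_Reals. intros eps Heps.
    destruct (proj1 (is_derive_Reals _ _ _) (H1 c) eps Heps) as [d1 Hd1].
    destruct (proj1 (is_derive_Reals _ _ _) (H2 c) eps Heps) as [d2 Hd2].
    assert (Hd : 0 < Rmin d1 d2) by (apply Rmin_pos; apply cond_pos).
    exists (mkposreal _ Hd). intros h Hh0 Hh. simpl in Hh.
    rewrite (glue_left c f1 f2 c) by lra.
    destruct (Rle_dec h 0).
    + rewrite glue_left by lra. apply Hd1; auto.
      apply Rlt_le_trans with (1 := Hh). apply Rmin_l.
    + rewrite glue_right by lra. rewrite E0, E1. apply Hd2; auto.
      apply Rlt_le_trans with (1 := Hh). apply Rmin_r.
  - rewrite glue_right by lra.
    exact (is_derive_ext_loc _ _ _ _ (glue_locally_right c f1 f2 t Hgt) (H2 t)).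
Qed.

Lemma continuous_glue (c : R) (f1 f2 : R -> R) :
  (forall t, continuous f1 t) -> (forall t, continuous f2 t) ->
  f1 c = f2 c -> forall t, continuous (glue c f1 f2) t.
Proof.
  intros H1 H2 E0 t.
  destruct (Rtotal_order t c) as [Hlt | [-> | Hgt]].
  - exact (continuous_ext_loc _ _ _ (glue_locally_left c f1 f2 t Hlt) (H1 t)).
  - apply continuity_pt_filterlim. intros eps Heps.
    destruct (proj2 (continuity_pt_filterlim _ _) (H1 c) eps Heps) as [d1 [Hd1 P1]].
    destruct (proj2 (continuity_pt_filterlim _ _) (H2 c) eps Heps) as [d2 [Hd2 P2]].
    exists (Rmin d1 d2). split; [apply Rmin_pos; auto|].
    intros x [_ Hx]. simpl in *. unfold R_dist in *.
    rewrite (glue_left c f1 f2 c) by lra.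
    assert (Hx1 : Rabs (x - c) < d1) by (apply Rlt_le_trans with (1 := Hx); apply Rmin_l).
    assert (Hx2 : Rabs (x - c) < d2) by (apply Rlt_le_trans with (1 := Hx); apply Rmin_r).
    destruct (Rle_dec x c).
    + rewrite glue_left by lra.
      destruct (Req_dec x c) as [->|Hne].
      * rewrite Rminus_diag, Rabs_R0; auto.
      * apply P1. repeat split; auto.
    + rewrite glue_right by lra. rewrite E0. apply P2. repeat split; auto. lra.
  - exact (continuous_ext_loc _ _ _ (glue_locally_right c f1 f2 t Hgt) (H2 t)).
Qed.

Lemma is_derive_continuous (f : R -> R) x l : is_derive f x l -> continuous f x.
Proof.
  intros H. apply (ex_derive_continuous (K := R_AbsRing) (V := R_NormedModule)). exists l; exact H.
Qed.

Ltac continuous_R :=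
  repeat match goal with
  | |- continuous (fun _ => ?c) _ => apply continuous_const
  | |- continuous (fun t => @?f t + @?g t) _ => apply (continuous_plus f g)
  | |- continuous (fun t => @?f t - @?g t) _ => apply (continuous_minus f g)
  | |- continuous (fun t => @?f t * @?g t) _ => apply (continuous_mult f g)
  | |- continuous (fun t => - @?f t) _ => apply (continuous_opp f)
  end; try assumption.

Definition C1_1 (p : R -> R) : Prop :=
  (forall x, ex_derive p x) /\ (forall x, continuous (Derive p) x).

Lemma C1_1_continuous p : C1_1 p -> forall x, continuous p x.
Proof. intros [H _] x. exact (ex_derive_continuous p x (H x)). Qed.

Lemma C1_1_const c : C1_1 (fun _ => c).
Proof.
  split; [intros; apply ex_derive_const|].
  intros x. apply continuous_ext with (fun _ => 0); [|apply continuous_const].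
  intros; rewrite Derive_const; reflexivity.
Qed.

Lemma C1_1_of_derive (p dp : R -> R) :
  (forall x, is_derive p x (dp x)) -> (forall x, continuous dp x) -> C1_1 p.
Proof.
  intros Hp Hc. split; [intros x; exists (dp x); apply Hp|].
  intros x. apply continuous_ext with dp; [|apply Hc].
  intros s; symmetry; apply is_derive_unique, Hp.
Qed.

Definition sepfun (p r : R -> R) : fn3 := fun x _ t => p x * r t.

Lemma cont3_sepfun p r :
  (forall x, continuous p x) -> (forall t, continuous r t) -> cont3 (sepfun p r).
Proof.
  intros Hp Hr x y t. unfold sepfun.
  apply (continuous_mult (fun q : R * R * R => p (fst (fst q))) (fun q => r (snd q))).
  - apply continuous_comp with (f := fun q : R * R * R => fst (fst q)); [|apply Hp].
    apply continuous_comp with (f := fun q : R * R * R => fst q); apply continuous_fst.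
  - apply continuous_comp with (f := fun q : R * R * R => snd q); [apply continuous_snd | apply Hr].
Qed.

Lemma dspX_sepfun p r : dsp IX (sepfun p r) = sepfun (Derive p) r.
Proof.
  do 3 (apply functional_extensionality; intro). unfold dsp, sepfun. apply Derive_scal_l.
Qed.

Lemma dspY_sepfun p r : dsp IY (sepfun p r) = sepfun (fun _ => 0) r.
Proof.
  do 3 (apply functional_extensionality; intro). unfold dsp, sepfun.
  rewrite Derive_const; ring.
Qed.

Lemma dt_sepfun p r : dt (sepfun p r) = sepfun p (Derive r).
Proof.
  do 3 (apply functional_extensionality; intro). unfold dt, sepfun. apply Derive_scal.
Qed.

Lemma C1_3_sepfun p r : C1_1 p -> C1_1 r -> C1_3 (sepfun p r).
Proof.
  intros Hp Hr. unfold C1_3. rewrite dspX_sepfun, dspY_sepfun, dt_sepfun.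
  split; [|split; [|split; [|split]]].
  - apply cont3_sepfun; apply C1_1_continuous; auto.
  - intros x y t. unfold sepfun. split; [|split].
    + apply ex_derive_mult; [apply Hp | apply ex_derive_const].
    + apply ex_derive_const.
    + apply (ex_derive_scal r). apply Hr.
  - apply cont3_sepfun; [apply Hp | apply C1_1_continuous; auto].
  - apply cont3_sepfun; [apply C1_1_continuous, C1_1_const | apply C1_1_continuous; auto].
  - apply cont3_sepfun; [apply C1_1_continuous; auto | apply Hr].
Qed.

Lemma C2_3_sepfun p r :
  C1_1 p -> C1_1 (Derive p) -> C1_1 r -> C1_1 (Derive r) -> C2_3 (sepfun p r).
Proof.
  intros. unfold C2_3. rewrite dspX_sepfun, dspY_sepfun, dt_sepfun.
  split; [|split; [|split]]; apply C1_3_sepfun; first [assumption | apply C1_1_const].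
Qed.

Lemma periodic2_sepfun_cos (n : nat) (r : R -> R) :
  periodic2 (sepfun (fun x => cos (INR n * x)) r).
Proof.
  intros x y t. unfold sepfun. split; [|reflexivity].
  replace (INR n * (x + 2 * PI)) with (INR n * x + 2 * INR n * PI) by ring.
  rewrite cos_period; reflexivity.
Qed.

(* Shaped so that [diag_t (fun _ => a) b] is convertible to [diagmat a b]. *)
Definition diag_t (a : R -> R) (b : R) : matfn :=
  fun i j _ _ t =>
    match i, j with
    | IX, IX => a t
    | IY, IY => b
    | _, _ => 0
    end.

Lemma periodic2_diag_t a b i j : periodic2 (diag_t a b i j).
Proof. intros x y t. destruct i, j; split; reflexivity. Qed.

Lemma wave_op_diag_t_sepfun (a : R -> R) (b : R) (p r : R -> R) x y t :
  wave_op (diag_t a b) (sepfun p r) x y t =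
  p x * Derive (Derive r) t + Derive (Derive p) x * (a t * r t).
Proof.
  unfold wave_op. rewrite !dt_sepfun, dspX_sepfun, dspY_sepfun. unfold dsp, sepfun, diag_t.
  rewrite (Derive_ext (fun s => a t * (Derive p s * r t)) (fun s => Derive p s * (a t * r t)))
    by (intros; ring).
  rewrite Derive_scal_l.
  rewrite (Derive_ext (fun s => 0 * (0 * r t)) (fun _ => 0)) by (intros; ring).
  rewrite (Derive_ext (fun s => 0 * (Derive p x * r t)) (fun _ => 0)) by (intros; ring).
  rewrite (Derive_ext (fun s => b * (0 * r t)) (fun _ => 0)) by (intros; ring).
  rewrite !Derive_const. ring.
Qed.

Lemma Derive_cos_scal (k : R) :
  Derive (fun x => cos (k * x)) = (fun x => - k * sin (k * x)).
Proof.
  apply functional_extensionality; intro x. apply is_derive_unique. auto_derive; auto. ring.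
Qed.

Lemma Derive_opp_sin_scal (k : R) :
  Derive (fun x => - k * sin (k * x)) = (fun x => - k ^ 2 * cos (k * x)).
Proof.
  apply functional_extensionality; intro x. apply is_derive_unique. auto_derive; auto. ring.
Qed.

Lemma C1_1_cos_scal k : C1_1 (fun x => cos (k * x)).
Proof.
  apply (C1_1_of_derive _ (fun x => - k * sin (k * x))).
  - intros x. auto_derive; auto. ring.
  - intros x. eapply is_derive_continuous. auto_derive; auto.
Qed.

Lemma C1_1_Derive_cos_scal k : C1_1 (Derive (fun x => cos (k * x))).
Proof.
  rewrite Derive_cos_scal. apply (C1_1_of_derive _ (fun x => - k ^ 2 * cos (k * x))).
  - intros x. auto_derive; auto. ring.
  - intros x. eapply is_derive_continuous. auto_derive; auto.
Qed.

Lemma Derive2_exp_decay (c z t : R) :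
  Derive (Derive (fun t => exp (- c * (t - z)))) t = c ^ 2 * exp (- c * (t - z)).
Proof.
  rewrite (Derive_ext _ (fun t => - c * exp (- c * (t - z)))).
  - apply is_derive_unique. auto_derive; auto. unfold Rminus. ring.
  - intros s. apply is_derive_unique. auto_derive; auto. unfold Rminus. ring.
Qed.

Lemma solves_at_cos_diag_t mu k (a : R -> R) (b : R) (r : R -> R) x y t :
  Derive (Derive r) t = (k ^ 2 * a t - mu) * r t ->
  solves_at mu (diag_t a b) (sepfun (fun x => cos (k * x)) r) x y t.
Proof.
  intros Hr. unfold solves_at.
  rewrite wave_op_diag_t_sepfun, Hr, Derive_cos_scal, Derive_opp_sin_scal. unfold sepfun. ring.
Qed.

Lemma C1_3_timefun (r : R -> R) : C1_1 r -> C1_3 (fun _ _ t => r t).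
Proof.
  intros Hr. replace (fun _ _ t => r t) with (sepfun (fun _ => 1) r).
  - apply C1_3_sepfun; [apply C1_1_const | exact Hr].
  - do 3 (apply functional_extensionality; intro). unfold sepfun. ring.
Qed.

Lemma reg_class_diag_t (L Cb : R) (a : R -> R) (b : R) :
  C1_1 a -> (forall t, / L <= a t <= L) -> / L <= b <= L ->
  (forall t, Rabs (Derive a t) <= Cb) -> 0 <= Cb ->
  reg_class L Cb (diag_t a b).
Proof.
  intros Ha Hab Hb Hda HC. split; [|split].
  - intros x y t xi1 xi2. specialize (Hab t). unfold quadform, diag_t.
    assert (0 <= xi1 ^ 2) by apply pow2_ge_0. assert (0 <= xi2 ^ 2) by apply pow2_ge_0.
    split; nra.
  - intros i j. destruct i, j;
      [ apply (C1_3_timefun a) | apply (C1_3_timefun (fun _ => 0))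
      | apply (C1_3_timefun (fun _ => 0)) | apply (C1_3_timefun (fun _ => b)) ];
      auto using C1_1_const.
  - intros i j x y t. unfold dsp, dt, diag_t.
    destruct i, j; rewrite ?Derive_const, ?Rabs_R0; repeat split; auto.
Qed.

(* [riccati_sol a b c] is the increasing solution of [y' = riccati_rhs a b y]: it inverts
   [y |-> c - a / y + b * y], a primitive of [1 / riccati_rhs a b]. *)
Definition riccati_sol (a b c s : R) : R :=
  ((s - c) + sqrt ((s - c) ^ 2 + 4 * a * b)) / (2 * b).
Definition riccati_rhs (a b y : R) : R := y ^ 2 / (a + b * y ^ 2).
Definition riccati_drhs (a b y : R) : R := 2 * a * y / (a + b * y ^ 2) ^ 2.

Section Riccati.

Variables a b c : R.
Hypothesis Ha : 0 < a.
Hypothesis Hb : 0 < b.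

Lemma riccati_sqrt_gt s : Rabs (s - c) < sqrt ((s - c) ^ 2 + 4 * a * b).
Proof.
  assert (0 <= (s - c) ^ 2) by apply pow2_ge_0. assert (0 < a * b) by nra.
  rewrite <- sqrt_Rsqr_abs. apply sqrt_lt_1; [apply Rle_0_sqr | lra |]. unfold Rsqr; lra.
Qed.

Lemma riccati_sqrt_sq s :
  sqrt ((s - c) ^ 2 + 4 * a * b) ^ 2 = (s - c) ^ 2 + 4 * a * b.
Proof.
  assert (0 <= (s - c) ^ 2) by apply pow2_ge_0. assert (0 < a * b) by nra.
  apply pow2_sqrt. lra.
Qed.

Lemma riccati_sol_pos s : 0 < riccati_sol a b c s.
Proof.
  assert (H := riccati_sqrt_gt s). assert (H' := Rle_abs (- (s - c))).
  rewrite Rabs_Ropp in H'. unfold riccati_sol. apply Rdiv_lt_0_compat; lra.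
Qed.

Lemma riccati_sol_quadratic s :
  b * riccati_sol a b c s ^ 2 - (s - c) * riccati_sol a b c s - a = 0.
Proof.
  assert (HS := riccati_sqrt_sq s).
  unfold riccati_sol. set (S := sqrt _) in *. field_simplify_eq; [|lra]. lra.
Qed.

Lemma riccati_sol_spec s :
  s = c - a / riccati_sol a b c s + b * riccati_sol a b c s.
Proof.
  assert (Hy := riccati_sol_pos s). assert (Hq := riccati_sol_quadratic s).
  set (y := riccati_sol a b c s) in *. field_simplify_eq; [|lra]. nra.
Qed.

Lemma riccati_sol_at y : 0 < y -> riccati_sol a b c (c - a / y + b * y) = y.
Proof.
  intros Hy. unfold riccati_sol.
  replace (c - a / y + b * y - c) with (b * y - a / y) by ring.
  replace ((b * y - a / y) ^ 2 + 4 * a * b) with ((b * y + a / y) ^ 2) by (field; lra).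
  rewrite sqrt_pow2; [field; lra|].
  assert (0 < a / y) by (apply Rdiv_lt_0_compat; auto). nra.
Qed.

Lemma riccati_sol_le s1 s2 : s1 <= s2 -> riccati_sol a b c s1 <= riccati_sol a b c s2.
Proof.
  intros Hs. apply Rnot_lt_le. intros Hlt.
  assert (Hy2 := riccati_sol_pos s2).
  assert (E1 := riccati_sol_spec s1). assert (E2 := riccati_sol_spec s2).
  set (y1 := riccati_sol a b c s1) in *. set (y2 := riccati_sol a b c s2) in *.
  assert (a / y1 < a / y2).
  { unfold Rdiv. apply Rmult_lt_compat_l; auto. apply Rinv_lt_contravar; nra. }
  nra.
Qed.

Lemma is_derive_riccati_sol s :
  is_derive (riccati_sol a b c) s (riccati_rhs a b (riccati_sol a b c s)).
Proof.
  assert (HS := riccati_sqrt_gt s). assert (H0 := Rabs_pos (s - c)).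
  assert (HS2 := riccati_sqrt_sq s). assert (Hq := riccati_sol_quadratic s).
  assert (Hd : is_derive (riccati_sol a b c) s
                 (riccati_sol a b c s / sqrt ((s - c) ^ 2 + 4 * a * b))).
  { unfold riccati_sol. auto_derive.
    - assert (0 <= (s - c) ^ 2) by apply pow2_ge_0. nra.
    - replace ((s + - c) * ((s + - c) * 1) + 4 * a * b) with ((s - c) ^ 2 + 4 * a * b) by ring.
      field. lra. }
  set (S := sqrt _) in *. set (y := riccati_sol a b c s) in *.
  assert (E : 2 * b * y = (s - c) + S) by (unfold y, riccati_sol; fold S; field; lra).
  (* the quadratic equation for [y] turns [y' = y / S] into the Riccati equation *)
  assert (HyS : y * S = a + b * y ^ 2) by nra.
  unfold riccati_rhs. rewrite <- HyS. replace (y ^ 2 / (y * S)) with (y / S); [exact Hd|].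
  assert (Hy := riccati_sol_pos s). fold y in Hy. field. lra.
Qed.

Lemma is_derive_riccati_rhs y : is_derive (riccati_rhs a b) y (riccati_drhs a b y).
Proof.
  assert (0 <= y ^ 2) by apply pow2_ge_0.
  unfold riccati_rhs, riccati_drhs. auto_derive; [nra|]. field. nra.
Qed.

Lemma riccati_rhs_bounds y : 0 <= riccati_rhs a b y <= / b.
Proof.
  assert (0 <= y ^ 2) by apply pow2_ge_0. assert (HN : 0 < a + b * y ^ 2) by nra.
  assert (E : riccati_rhs a b y = / b - a / (b * (a + b * y ^ 2)))
    by (unfold riccati_rhs; field; lra).
  assert (0 < a / (b * (a + b * y ^ 2))) by (apply Rdiv_lt_0_compat; nra).
  split; [|lra].
  unfold riccati_rhs. apply Rdiv_le_0_compat; lra.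
Qed.

(* AM-GM: [4 a (b y^2) <= (a + b y^2)^2]. *)
Lemma riccati_drhs_rhs_bound y : 0 < y ->
  0 <= riccati_drhs a b y * riccati_rhs a b y <= / (2 * b ^ 2 * y).
Proof.
  intros Hy. assert (Hy2 : 0 < y ^ 2) by (apply pow_lt; auto).
  assert (Hby : 0 < b * y ^ 2) by nra. assert (Haby : 0 < 4 * a * (b * y ^ 2)) by nra.
  set (N := a + b * y ^ 2). assert (HN : 0 < N) by (unfold N; nra).
  assert (Hb2 : 0 < 2 * b ^ 2 * y) by (apply Rmult_lt_0_compat; [nra | auto]).
  assert (E : riccati_drhs a b y * riccati_rhs a b y
              = (4 * a * (b * y ^ 2)) * (b * y ^ 2) / N ^ 3 * / (2 * b ^ 2 * y))
    by (unfold riccati_drhs, riccati_rhs; fold N; field; repeat split; lra).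
  assert (HAM : 4 * a * (b * y ^ 2) <= N ^ 2).
  { assert (0 <= (a - b * y ^ 2) ^ 2) by apply pow2_ge_0. unfold N; nra. }
  assert (HK : (4 * a * (b * y ^ 2)) * (b * y ^ 2) <= N ^ 3).
  { replace (N ^ 3) with (N ^ 2 * N) by ring.
    apply Rmult_le_compat; [lra | lra | exact HAM | unfold N; lra]. }
  assert (H1 : (4 * a * (b * y ^ 2)) * (b * y ^ 2) / N ^ 3 <= 1).
  { apply Rmult_le_reg_r with (N ^ 3); [apply pow_lt; auto|]. unfold Rdiv.
    rewrite Rmult_assoc, Rinv_l by (apply pow_nonzero; lra). lra. }
  assert (H0 : 0 <= (4 * a * (b * y ^ 2)) * (b * y ^ 2) / N ^ 3)
    by (apply Rdiv_le_0_compat; [nra | apply pow_lt; auto]).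
  assert (Hi : 0 < / (2 * b ^ 2 * y)) by (apply Rinv_0_lt_compat; auto).
  rewrite E. split; [nra|].
  rewrite <- (Rmult_1_l (/ (2 * b ^ 2 * y))) at 2. apply Rmult_le_compat_r; lra.
Qed.

End Riccati.

(* [ramp_poly] is the quartic with p(0) = 0, p'(0) = 1, p''(0) = 0, p'(1) = p''(1) = 0,
   so that [ramp tm L] is a C^2 map equal to [t] before [tm] and constant after [tm + L]. *)
Definition ramp_poly (x : R) : R := x - x ^ 3 + x ^ 4 / 2.
Definition ramp_poly1 (x : R) : R := 1 - 3 * x ^ 2 + 2 * x ^ 3.
Definition ramp_poly2 (x : R) : R := - 6 * x + 6 * x ^ 2.

Definition ramp (tm L : R) : R -> R :=
  glue tm (fun t => t)
    (glue (tm + L) (fun t => tm + L * ramp_poly ((t - tm) / L)) (fun _ => tm + L / 2)).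
Definition dramp (tm L : R) : R -> R :=
  glue tm (fun _ => 1) (glue (tm + L) (fun t => ramp_poly1 ((t - tm) / L)) (fun _ => 0)).
Definition ddramp (tm L : R) : R -> R :=
  glue tm (fun _ => 0) (glue (tm + L) (fun t => ramp_poly2 ((t - tm) / L) / L) (fun _ => 0)).

Section Ramp.

Variables tm L : R.
Hypothesis HL : 0 < L.

Lemma is_derive_ramp t : is_derive (ramp tm L) t (dramp tm L t).
Proof.
  revert t. unfold ramp, dramp. apply is_derive_glue.
  - intros t. auto_derive; auto.
  - apply is_derive_glue.
    + intros t. unfold ramp_poly, ramp_poly1. auto_derive; auto. field. lra.
    + intros t. auto_derive; auto.
    + replace (tm + L - tm) with L by ring. unfold ramp_poly. field. lra.
    + replace (tm + L - tm) with L by ring. replace (L / L) with 1 by (field; lra).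
      unfold ramp_poly1. ring.
  - rewrite glue_left by lra. replace (tm - tm) with 0 by ring.
    unfold ramp_poly, Rdiv. ring.
  - rewrite glue_left by lra. replace (tm - tm) with 0 by ring.
    unfold ramp_poly1, Rdiv. ring.
Qed.

Lemma is_derive_dramp t : is_derive (dramp tm L) t (ddramp tm L t).
Proof.
  revert t. unfold dramp, ddramp. apply is_derive_glue.
  - intros t. auto_derive; auto.
  - apply is_derive_glue.
    + intros t. unfold ramp_poly1, ramp_poly2. auto_derive; auto. field. lra.
    + intros t. auto_derive; auto.
    + replace (tm + L - tm) with L by ring. replace (L / L) with 1 by (field; lra).
      unfold ramp_poly1. ring.
    + replace (tm + L - tm) with L by ring. replace (L / L) with 1 by (field; lra).
      unfold ramp_poly2. field. lra.
  - rewrite glue_left by lra. replace (tm - tm) with 0 by ring.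
    unfold ramp_poly1, Rdiv. ring.
  - rewrite glue_left by lra. replace (tm - tm) with 0 by ring.
    unfold ramp_poly2, Rdiv. ring.
Qed.

Lemma continuous_ddramp t : continuous (ddramp tm L) t.
Proof.
  revert t. unfold ddramp. apply continuous_glue.
  - intros; apply continuous_const.
  - apply continuous_glue.
    + intros t. eapply is_derive_continuous. unfold ramp_poly2. auto_derive; auto.
    + intros; apply continuous_const.
    + replace (tm + L - tm) with L by ring. replace (L / L) with 1 by (field; lra).
      unfold ramp_poly2. field. lra.
  - rewrite glue_left by lra. replace (tm - tm) with 0 by ring.
    unfold ramp_poly2, Rdiv. ring.
Qed.

Ltac ramp_cases :=
  unfold ramp, dramp, ddramp, glue;
  repeat match goal with |- context [Rle_dec ?a ?b] =>
    destruct (Rle_dec a b); try (exfalso; lra) end.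

Lemma ramp_before t : t <= tm ->
  ramp tm L t = t /\ dramp tm L t = 1 /\ ddramp tm L t = 0.
Proof. intros Ht. ramp_cases. auto. Qed.

Lemma ramp_after t : tm + L <= t ->
  ramp tm L t = tm + L / 2 /\ dramp tm L t = 0 /\ ddramp tm L t = 0.
Proof.
  intros Ht. ramp_cases; [|auto].
  replace t with (tm + L) by lra. replace (tm + L - tm) with L by ring.
  replace (L / L) with 1 by (field; lra). unfold ramp_poly, ramp_poly1, ramp_poly2.
  split; [field | split; [ring | field; lra]].
Qed.

Lemma ramp_during t : tm < t <= tm + L ->
  ramp tm L t = tm + L * ramp_poly ((t - tm) / L) /\
  dramp tm L t = ramp_poly1 ((t - tm) / L) /\
  ddramp tm L t = ramp_poly2 ((t - tm) / L) / L.
Proof. intros Ht. ramp_cases. auto. Qed.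

Lemma ramp_poly_bounds x : 0 <= x <= 1 ->
  0 <= ramp_poly x <= 1 / 2 /\ 0 <= ramp_poly1 x <= 1 /\ Rabs (ramp_poly2 x) <= 3 / 2.
Proof.
  intros Hx. unfold ramp_poly, ramp_poly1, ramp_poly2.
  assert (0 <= (1 - x) ^ 3 * (1 + x)) by (apply Rmult_le_pos; [apply pow_le|]; lra).
  assert (0 <= x * (1 - x ^ 2)) by (apply Rmult_le_pos; [lra|]; simpl; nra).
  assert (0 <= x ^ 4) by (apply pow_le; lra).
  assert (0 <= (1 - x) ^ 2 * (1 + 2 * x)) by (apply Rmult_le_pos; [apply pow_le|]; lra).
  assert (0 <= x ^ 2 * (3 - 2 * x)) by (apply Rmult_le_pos; [apply pow_le|]; lra).
  assert (0 <= (x - 1 / 2) ^ 2) by apply pow2_ge_0.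
  assert (0 <= x * (1 - x)) by (apply Rmult_le_pos; lra).
  repeat split; try apply Rabs_le; try split; nra.
Qed.

Lemma ramp_unit_interval t : tm < t <= tm + L -> 0 <= (t - tm) / L <= 1.
Proof.
  intros Ht. split; [apply Rdiv_le_0_compat; lra|].
  apply Rmult_le_reg_r with L; auto. unfold Rdiv. rewrite Rmult_assoc, Rinv_l; lra.
Qed.

Lemma dramp_bounds t : 0 <= dramp tm L t <= 1.
Proof.
  destruct (Rle_or_lt t tm) as [H1|H1]; [rewrite (proj1 (proj2 (ramp_before t H1))); lra|].
  destruct (Rle_or_lt t (tm + L)) as [H2|H2];
    [|rewrite (proj1 (proj2 (ramp_after t (Rlt_le _ _ H2)))); lra].
  rewrite (proj1 (proj2 (ramp_during t (conj H1 H2)))).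
  apply (ramp_poly_bounds _ (ramp_unit_interval t (conj H1 H2))).
Qed.

Lemma ddramp_bound t : Rabs (ddramp tm L t) <= 3 / (2 * L).
Proof.
  assert (0 < 3 / (2 * L)) by (apply Rdiv_lt_0_compat; lra).
  destruct (Rle_or_lt t tm) as [H1|H1];
    [rewrite (proj2 (proj2 (ramp_before t H1))), Rabs_R0; lra|].
  destruct (Rle_or_lt t (tm + L)) as [H2|H2];
    [|rewrite (proj2 (proj2 (ramp_after t (Rlt_le _ _ H2)))), Rabs_R0; lra].
  rewrite (proj2 (proj2 (ramp_during t (conj H1 H2)))).
  destruct (ramp_poly_bounds _ (ramp_unit_interval t (conj H1 H2))) as (_ & _ & B).
  unfold Rdiv at 1. rewrite Rabs_mult, Rabs_inv, (Rabs_pos_eq L) by lra.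
  replace (3 / (2 * L)) with (3 / 2 * / L) by (field; lra).
  apply Rmult_le_compat_r; [apply Rlt_le, Rinv_0_lt_compat|]; lra.
Qed.

Lemma ramp_le t : ramp tm L t <= tm + L / 2.
Proof.
  destruct (Rle_or_lt t tm) as [H1|H1]; [rewrite (proj1 (ramp_before t H1)); lra|].
  destruct (Rle_or_lt t (tm + L)) as [H2|H2];
    [|rewrite (proj1 (ramp_after t (Rlt_le _ _ H2))); lra].
  rewrite (proj1 (ramp_during t (conj H1 H2))).
  destruct (ramp_poly_bounds _ (ramp_unit_interval t (conj H1 H2))) as (B & _). nra.
Qed.

Lemma ramp_ge t : tm <= t -> tm <= ramp tm L t.
Proof.
  intros H0. destruct (Rle_or_lt t tm) as [H1|H1]; [rewrite (proj1 (ramp_before t H1)); lra|].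
  destruct (Rle_or_lt t (tm + L)) as [H2|H2];
    [|rewrite (proj1 (ramp_after t (Rlt_le _ _ H2))); lra].
  rewrite (proj1 (ramp_during t (conj H1 H2))).
  destruct (ramp_poly_bounds _ (ramp_unit_interval t (conj H1 H2))) as (B & _). nra.
Qed.

End Ramp.

Definition omega (mu : R) : R := sqrt (mu / 2).
Definition ecoef (mu k : R) : R := 2 * omega mu * sqrt k.
Definition ystar2 (mu k : R) : R := ecoef mu k - omega mu ^ 2.
Definition ystar (mu k : R) : R := sqrt (ystar2 mu k).

(* Chosen so that the flow [y' = riccati_rhs y] agrees to second order at [ystar] with
   [y' = y^2 + omega^2], the equation of [omega tan (omega t)]: [riccati_rhs] and its derivative
   take there the values [ystar^2 + omega^2] and [2 ystar]. Also [ric_b = 1 / (4 k)], which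
   keeps [riccati_rhs] below [4 k]. *)
Definition ric_a (mu k : R) : R := (ystar2 mu k / ecoef mu k) ^ 2.
Definition ric_b (mu k : R) : R := omega mu ^ 2 / ecoef mu k ^ 2.

Definition admissible (mu k : R) : Prop :=
  0 < mu /\ 100 <= ystar2 mu k /\ 50 <= k /\ mu <= k ^ 2.

Lemma omega_pos mu : 0 < mu -> 0 < omega mu.
Proof. intros; unfold omega; apply sqrt_lt_R0; lra. Qed.

Lemma omega_sq mu : 0 < mu -> omega mu ^ 2 = mu / 2.
Proof. intros; unfold omega; apply pow2_sqrt; lra. Qed.

Lemma admissible_eventually mu : 0 < mu ->
  exists K : nat, forall k : nat, (K <= k)%nat -> admissible mu (INR k).
Proof.
  intros Hmu. assert (Hw := omega_pos mu Hmu).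
  set (M := (100 + omega mu ^ 2) / (2 * omega mu)).
  assert (HM : 0 < M) by (unfold M; apply Rdiv_lt_0_compat; nra).
  destruct (INR_archimed 1 (50 + mu + M ^ 2)) as [K HK]; [lra|].
  exists K. intros k Hk. apply le_INR in Hk. rewrite Rmult_1_r in HK.
  assert (HM2 : 0 <= M ^ 2) by apply pow2_ge_0.
  set (kr := INR k) in *. assert (Hkr : 50 + mu + M ^ 2 < kr) by lra.
  assert (Hs : M <= sqrt kr).
  { rewrite <- (sqrt_pow2 M) by lra. apply sqrt_le_1; lra. }
  assert (2 * omega mu * M = 100 + omega mu ^ 2) by (unfold M; field; lra).
  repeat split; [lra | | lra | nra].
  unfold ystar2, ecoef. nra.
Qed.

Definition ramp_len : R := 1 / 10.

Section Construction.

Variables mu k : R.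
Hypothesis Hadm : admissible mu k.

Let Hmu : 0 < mu := proj1 Hadm.
Let Hys2 : 100 <= ystar2 mu k := proj1 (proj2 Hadm).
Let Hk : 50 <= k := proj1 (proj2 (proj2 Hadm)).
Let Hmuk : mu <= k ^ 2 := proj2 (proj2 (proj2 Hadm)).

Local Notation w := (omega mu).
Local Notation ys := (ystar mu k).
Local Notation ra := (ric_a mu k).
Local Notation rb := (ric_b mu k).

Lemma ecoef_pos : 0 < ecoef mu k.
Proof.
  unfold ecoef. apply Rmult_lt_0_compat; [apply Rmult_lt_0_compat; [lra | apply omega_pos; auto]|].
  apply sqrt_lt_R0; lra.
Qed.

Lemma ystar_sq : ys ^ 2 = ystar2 mu k.
Proof. unfold ystar. apply pow2_sqrt; lra. Qed.

Lemma ystar_pos : 0 < ys.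
Proof. unfold ystar. apply sqrt_lt_R0; lra. Qed.

Lemma ystar_ge_10 : 10 <= ys.
Proof. assert (H := ystar_sq). assert (H0 := ystar_pos). nra. Qed.

Lemma ystar_le : ys <= 4 * k / 5.
Proof.
  assert (Hsk : sqrt k ^ 2 = k) by (apply pow2_sqrt; lra).
  assert (0 <= (sqrt k - w) ^ 2) by apply pow2_ge_0.
  assert (ystar2 mu k <= k ^ 2 / 2) by (unfold ystar2, ecoef; nra).
  assert (Hy2 := ystar_sq). assert (Hy := ystar_pos). nra.
Qed.

Lemma ric_b_eq : rb = / (4 * k).
Proof.
  assert (Hsk : sqrt k ^ 2 = k) by (apply pow2_sqrt; lra).
  assert (Hw := omega_pos mu Hmu). assert (0 < sqrt k) by (apply sqrt_lt_R0; lra).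
  unfold ric_b, ecoef. field_simplify_eq; [|split; lra]. rewrite Hsk. ring.
Qed.

Lemma ric_b_pos : 0 < rb.
Proof. rewrite ric_b_eq. apply Rinv_0_lt_compat; lra. Qed.

Lemma ric_a_pos : 0 < ra.
Proof. unfold ric_a. apply pow_lt, Rdiv_lt_0_compat; [lra | apply ecoef_pos]. Qed.

Lemma ric_a_le_1 : ra <= 1.
Proof.
  assert (HE := ecoef_pos). assert (Hw := omega_pos mu Hmu).
  assert (H : 0 <= ystar2 mu k / ecoef mu k <= 1).
  { split; [apply Rdiv_le_0_compat; lra|].
    apply Rmult_le_reg_r with (ecoef mu k); auto. unfold Rdiv.
    rewrite Rmult_assoc, Rinv_l by lra. unfold ystar2. nra. }
  unfold ric_a. rewrite <- (pow1 2). apply pow_incr. exact H.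
Qed.

Lemma riccati_rhs_ystar :
  riccati_rhs ra rb ys = ys ^ 2 + w ^ 2 /\ riccati_drhs ra rb ys = 2 * ys.
Proof.
  assert (HE := ecoef_pos). assert (Hy := ystar_pos). assert (Hy2 := ystar_sq).
  assert (HN : ra + rb * ys ^ 2 = ystar2 mu k / ecoef mu k).
  { unfold ric_a, ric_b. rewrite Hy2. unfold ystar2. field. lra. }
  unfold riccati_rhs, riccati_drhs. rewrite HN. split.
  - rewrite Hy2. unfold ystar2. field. unfold ystar2 in Hys2. split; lra.
  - unfold ric_a. rewrite <- Hy2. field. split; nra.
Qed.

(* [y^2 - riccati_rhs y + omega^2] is a square over a positive quantity. *)
Lemma riccati_rhs_le y : - w ^ 2 <= y ^ 2 - riccati_rhs ra rb y.
Proof.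
  assert (HE := ecoef_pos). assert (Ha := ric_a_pos). assert (Hb := ric_b_pos).
  assert (HN : 0 < ra + rb * y ^ 2) by (assert (0 <= y ^ 2) by apply pow2_ge_0; nra).
  assert (E : y ^ 2 - riccati_rhs ra rb y + w ^ 2 =
              rb * (y ^ 2 - ystar2 mu k) ^ 2 / (ra + rb * y ^ 2)).
  { unfold riccati_rhs. field_simplify_eq; [|lra].
    unfold ric_a, ric_b, ystar2. field. lra. }
  assert (0 <= rb * (y ^ 2 - ystar2 mu k) ^ 2 / (ra + rb * y ^ 2)).
  { apply Rdiv_le_0_compat; [apply Rmult_le_pos; [lra | apply pow2_ge_0] | lra]. }
  lra.
Qed.

Definition tau : R := atan (ys / w) / w.
Definition tshift : R := tau + ra / ys - rb * ys.
Definition ysol (s : R) : R := riccati_sol ra rb tshift s.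
Definition s_end : R := tshift - ra / k + rb * k.
Definition t_ramp : R := s_end - ramp_len / 2.
Definition t0 : R := t_ramp + ramp_len.
Definition phi : R -> R := ramp t_ramp ramp_len.
Definition dphi : R -> R := dramp t_ramp ramp_len.
Definition ddphi : R -> R := ddramp t_ramp ramp_len.

(* [ylog = - g' / g] on the transition region: it follows the Riccati flow in the
   reparametrised time [phi t], which stops at [s_end] where [ysol] reaches [k]. *)
Definition ylog (t : R) : R := ysol (phi t).
Definition rhs_ylog (t : R) : R := riccati_rhs ra rb (ylog t).

(* [q = g'' / g] for [g = exp (- int ylog)] *)
Definition q (t : R) : R := ylog t ^ 2 - rhs_ylog t * dphi t.
Definition dq (t : R) : R :=
  2 * ylog t * (dphi t * rhs_ylog t)
  - (dphi t * rhs_ylog t * riccati_drhs ra rb (ylog t) * dphi t + rhs_ylog t * ddphi t).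

Lemma ramp_len_pos : 0 < ramp_len.
Proof. unfold ramp_len; lra. Qed.

Lemma is_derive_ylog t : is_derive ylog t (dphi t * rhs_ylog t).
Proof.
  unfold ylog, rhs_ylog, ysol. apply (is_derive_comp (riccati_sol ra rb tshift) phi).
  - apply is_derive_riccati_sol; [apply ric_a_pos | apply ric_b_pos].
  - apply is_derive_ramp, ramp_len_pos.
Qed.

Lemma continuous_ylog t : continuous ylog t.
Proof. eapply is_derive_continuous, is_derive_ylog. Qed.

Lemma is_derive_rhs_ylog t :
  is_derive rhs_ylog t (dphi t * rhs_ylog t * riccati_drhs ra rb (ylog t)).
Proof.
  unfold rhs_ylog at 1. apply (is_derive_comp (riccati_rhs ra rb) ylog).
  - apply is_derive_riccati_rhs; [apply ric_a_pos | apply ric_b_pos].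
  - apply is_derive_ylog.
Qed.

Lemma continuous_rhs_ylog t : continuous rhs_ylog t.
Proof. eapply is_derive_continuous, is_derive_rhs_ylog. Qed.

Lemma continuous_drhs_ylog t : continuous (fun t => riccati_drhs ra rb (ylog t)) t.
Proof.
  apply continuous_comp; [apply continuous_ylog|].
  assert (Ha := ric_a_pos). assert (Hb := ric_b_pos).
  assert (HN : 0 < ra + rb * (ylog t * (ylog t * 1))).
  { assert (0 <= ylog t ^ 2) by apply pow2_ge_0. simpl in *. nra. }
  eapply is_derive_continuous. unfold riccati_drhs.
  auto_derive; [apply Rgt_not_eq, Rmult_lt_0_compat; lra | reflexivity].
Qed.

Lemma is_derive_q t : is_derive q t (dq t).
Proof.
  assert (Hy2 := is_derive_pow ylog 2 t _ (is_derive_ylog t)).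
  assert (Hrd := is_derive_mult rhs_ylog dphi t _ _ (is_derive_rhs_ylog t)
                   (is_derive_dramp t_ramp ramp_len ramp_len_pos t) Rmult_comm).
  assert (H := is_derive_minus (fun t => ylog t ^ 2) (fun t => rhs_ylog t * dphi t) t _ _ Hy2 Hrd).
  unfold q. replace (dq t) with (minus (INR 2 * (dphi t * rhs_ylog t) * ylog t ^ Nat.pred 2)
    (plus (scal (dphi t * rhs_ylog t * riccati_drhs ra rb (ylog t)) (dphi t))
          (scal (rhs_ylog t) (ddramp t_ramp ramp_len t)))); [exact H|].
  unfold minus, plus, scal, opp, dq, ddphi; simpl; unfold mult; simpl. ring.
Qed.

Lemma continuous_dq t : continuous dq t.
Proof.
  assert (Hd : continuous dphi t) by
    (eapply is_derive_continuous, is_derive_dramp, ramp_len_pos).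
  assert (Hdd : continuous ddphi t) by apply continuous_ddramp, ramp_len_pos.
  assert (Hy := continuous_ylog t). assert (Hr := continuous_rhs_ylog t).
  assert (Hdr := continuous_drhs_ylog t).
  unfold dq. continuous_R.
Qed.

Lemma omega_tau : w * tau = atan (ys / w).
Proof. assert (Hw := omega_pos mu Hmu). unfold tau. field. lra. Qed.

Lemma tau_pos : 0 < tau.
Proof.
  assert (Hw := omega_pos mu Hmu). assert (Hy := ystar_pos).
  unfold tau. apply Rdiv_lt_0_compat; auto.
  rewrite <- atan_0. apply atan_increasing. apply Rdiv_lt_0_compat; auto.
Qed.

Lemma cos_omega_tau_pos : 0 < cos (w * tau).
Proof. rewrite omega_tau. destruct (atan_bound (ys / w)). apply cos_gt_0; lra. Qed.

Lemma sin_omega_tau : sin (w * tau) = ys / w * cos (w * tau).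
Proof.
  assert (Hc := cos_omega_tau_pos).
  assert (Ht : tan (w * tau) = ys / w) by (rewrite omega_tau; apply tan_atan).
  unfold tan in Ht. rewrite <- Ht. field. lra.
Qed.

Lemma ysol_at y : 0 < y -> ysol (tshift - ra / y + rb * y) = y.
Proof. apply riccati_sol_at; [apply ric_a_pos | apply ric_b_pos]. Qed.

Lemma ysol_tau : ysol tau = ys.
Proof.
  rewrite <- (ysol_at ys ystar_pos). f_equal. unfold tshift. ring.
Qed.

Lemma ysol_s_end : ysol s_end = k.
Proof. apply ysol_at. lra. Qed.

Lemma ysol_le s1 s2 : s1 <= s2 -> ysol s1 <= ysol s2.
Proof. apply riccati_sol_le; [apply ric_a_pos | apply ric_b_pos]. Qed.

Lemma ysol_pos s : 0 < ysol s.
Proof. apply riccati_sol_pos; [apply ric_a_pos | apply ric_b_pos]. Qed.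

(* Since [ric_b k = 1 / 4], [ric_b ystar <= 1 / 5] and [ric_a / ystar <= 1 / 10], the
   Riccati time [s_end - tau] from [ystar] to [k] lies in [[ramp_len / 2, 7 / 20]]. *)
Lemma t_ramp_minus_tau_bounds : 0 <= t_ramp - tau <= 3 / 10.
Proof.
  assert (Hy := ystar_pos). assert (Hy10 := ystar_ge_10). assert (Hyk := ystar_le).
  assert (Ha := ric_a_pos). assert (Ha1 := ric_a_le_1). assert (Hb := ric_b_pos).
  assert (Hbk : rb * k = 1 / 4) by (rewrite ric_b_eq; field; lra).
  assert (Hby : rb * ys <= 1 / 5).
  { rewrite ric_b_eq. apply Rmult_le_reg_l with (4 * k); [lra|].
    rewrite <- Rmult_assoc, Rinv_r by lra. lra. }
  assert (Hay : ra / k <= ra / ys).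
  { unfold Rdiv. apply Rmult_le_compat_l; [lra|]. apply Rinv_le_contravar; lra. }
  assert (Hay2 : ra / ys <= 1 / 10).
  { apply Rmult_le_reg_r with ys; auto. unfold Rdiv. rewrite Rmult_assoc, Rinv_l by lra. lra. }
  assert (0 <= ra / k) by (apply Rdiv_le_0_compat; lra).
  assert (E : t_ramp - tau = ra / ys - rb * ys - ra / k + rb * k - ramp_len / 2)
    by (unfold t_ramp, s_end, tshift; ring).
  rewrite E. unfold ramp_len. nra.
Qed.

Lemma tau_le_t_ramp : tau <= t_ramp.
Proof. assert (H := t_ramp_minus_tau_bounds). lra. Qed.

Lemma transition_width : 0 < t0 - tau <= 2 / 5.
Proof. assert (H := t_ramp_minus_tau_bounds). unfold t0, ramp_len. lra. Qed.

Lemma ramp_before_tau t : t <= tau -> phi t = t /\ dphi t = 1 /\ ddphi t = 0.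
Proof. intros Ht. apply ramp_before. assert (H := tau_le_t_ramp). lra. Qed.

Lemma ylog_tau : ylog tau = ys.
Proof. unfold ylog. rewrite (proj1 (ramp_before_tau tau (Rle_refl _))). apply ysol_tau. Qed.

Lemma q_tau : q tau = - w ^ 2.
Proof.
  destruct (ramp_before_tau tau (Rle_refl _)) as (_ & D1 & _).
  unfold q, rhs_ylog. rewrite ylog_tau, D1, (proj1 riccati_rhs_ystar). ring.
Qed.

Lemma dq_tau : dq tau = 0.
Proof.
  destruct (ramp_before_tau tau (Rle_refl _)) as (_ & D1 & D2).
  unfold dq, rhs_ylog. rewrite ylog_tau, D1, D2.
  rewrite (proj1 riccati_rhs_ystar), (proj2 riccati_rhs_ystar).
  ring.
Qed.

Lemma ylog_pos t : 0 < ylog t.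
Proof. apply ysol_pos. Qed.

Lemma ylog_le_k t : ylog t <= k.
Proof.
  rewrite <- ysol_s_end. apply ysol_le. unfold phi.
  assert (H := ramp_le t_ramp ramp_len ramp_len_pos t). unfold t_ramp in *. lra.
Qed.

Lemma ystar_le_ylog t : tau <= t -> ys <= ylog t.
Proof.
  intros Ht. rewrite <- ysol_tau. apply ysol_le. unfold phi.
  assert (H := tau_le_t_ramp).
  destruct (Rle_or_lt t t_ramp) as [h|h].
  - rewrite (proj1 (ramp_before t_ramp ramp_len t h)). lra.
  - assert (H' := ramp_ge t_ramp ramp_len ramp_len_pos t (Rlt_le _ _ h)). lra.
Qed.

Lemma ylog_after_t0 t : t0 <= t -> ylog t = k /\ dphi t = 0.
Proof.
  intros Ht. destruct (ramp_after t_ramp ramp_len ramp_len_pos t Ht) as (E1 & E2 & _).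
  unfold ylog, phi, dphi. rewrite E1, E2. split; [|reflexivity].
  replace (t_ramp + ramp_len / 2) with s_end by (unfold t_ramp; ring). apply ysol_s_end.
Qed.

Definition logg (t : R) : R := - RInt ylog t0 t.
Definition g_amp : R := exp (logg tau) / cos (w * tau).

Definition g : R -> R := glue tau (fun t => g_amp * cos (w * t)) (fun t => exp (logg t)).
Definition dg : R -> R :=
  glue tau (fun t => - (g_amp * w * sin (w * t))) (fun t => - ylog t * exp (logg t)).
Definition ddg : R -> R :=
  glue tau (fun t => - (g_amp * w ^ 2 * cos (w * t))) (fun t => q t * exp (logg t)).
Definition acoef : R -> R := glue tau (fun _ => mu / (2 * k ^ 2)) (fun t => (q t + mu) / k ^ 2).
Definition dacoef : R -> R := glue tau (fun _ => 0) (fun t => dq t / k ^ 2).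

Lemma is_derive_logg t : is_derive logg t (- ylog t).
Proof.
  unfold logg. apply (is_derive_opp (fun t => RInt ylog t0 t)).
  apply (is_derive_RInt ylog (RInt ylog t0) t0 t); [|apply continuous_ylog].
  apply filter_forall. intros s. apply (RInt_correct (V := R_CompleteNormedModule)).
  apply (ex_RInt_continuous (V := R_CompleteNormedModule)). intros; apply continuous_ylog.
Qed.

Lemma is_derive_exp_logg t : is_derive (fun t => exp (logg t)) t (- ylog t * exp (logg t)).
Proof. apply (is_derive_comp exp logg); [apply is_derive_exp | apply is_derive_logg]. Qed.

Lemma is_derive_g t : is_derive g t (dg t).
Proof.
  assert (Hc := cos_omega_tau_pos). assert (Hw := omega_pos mu Hmu).
  revert t. unfold g, dg. apply is_derive_glue.
  - intros s. auto_derive; auto. ring.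
  - apply is_derive_exp_logg.
  - unfold g_amp. field. lra.
  - unfold g_amp. rewrite ylog_tau, sin_omega_tau. field. split; lra.
Qed.

Lemma is_derive_dg t : is_derive dg t (ddg t).
Proof.
  assert (Hc := cos_omega_tau_pos). assert (Hw := omega_pos mu Hmu).
  revert t. unfold dg, ddg. apply is_derive_glue.
  - intros s. auto_derive; auto. ring.
  - intros s. assert (Hy := is_derive_ylog s).
    assert (He := is_derive_exp_logg s).
    assert (H := is_derive_mult (fun t => - ylog t) (fun t => exp (logg t)) s _ _
                   (is_derive_opp ylog s _ Hy) He Rmult_comm).
    replace (q s * exp (logg s)) with
      (plus (scal (opp (dphi s * rhs_ylog s)) (exp (logg s)))
            (scal (- ylog s) (- ylog s * exp (logg s)))); [exact H|].
    unfold plus, scal, opp, q; simpl; unfold mult; simpl. ring.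
  - unfold g_amp. rewrite ylog_tau, sin_omega_tau. field. split; lra.
  - unfold g_amp. rewrite q_tau. field. lra.
Qed.

Lemma continuous_ddg t : continuous ddg t.
Proof.
  assert (Hc := cos_omega_tau_pos).
  revert t. unfold ddg. apply continuous_glue.
  - intros s. eapply is_derive_continuous. auto_derive; auto.
  - intros s. assert (Hq := is_derive_continuous _ _ _ (is_derive_q s)).
    assert (He := is_derive_continuous _ _ _ (is_derive_exp_logg s)).
    continuous_R.
  - unfold g_amp. rewrite q_tau. field. lra.
Qed.

Lemma is_derive_acoef t : is_derive acoef t (dacoef t).
Proof.
  assert (Hw2 := omega_sq mu Hmu).
  revert t. unfold acoef, dacoef. apply is_derive_glue.
  - intros s. auto_derive; auto.
  - intros s. assert (H := is_derive_scal_l (fun t => q t + mu) s (dq s + 0) (/ k ^ 2)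
      (is_derive_plus q (fun _ => mu) s _ _ (is_derive_q s) (is_derive_const mu s))).
    replace (dq s / k ^ 2) with (scal (dq s + 0) (/ k ^ 2)); [exact H|].
    unfold scal; simpl; unfold mult; simpl. field. lra.
  - rewrite q_tau, Hw2. field. lra.
  - rewrite dq_tau. field. lra.
Qed.

Lemma continuous_dacoef t : continuous dacoef t.
Proof.
  revert t. unfold dacoef. apply continuous_glue.
  - intros; apply continuous_const.
  - intros s. assert (H := continuous_dq s). unfold Rdiv. continuous_R.
  - rewrite dq_tau. field. lra.
Qed.

Lemma g_ode t : ddg t = (k ^ 2 * acoef t - mu) * g t.
Proof.
  assert (Hw2 := omega_sq mu Hmu).
  unfold ddg, acoef, g, glue. destruct (Rle_dec t tau); [rewrite Hw2|]; field; lra.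
Qed.

Lemma before_tau t : t <= tau -> acoef t = mu / (2 * k ^ 2) /\ g t = g_amp * cos (w * t).
Proof. intros Ht. unfold acoef, g. rewrite !glue_left by auto. auto. Qed.

Lemma after_t0 t : t0 <= t -> acoef t = 1 + mu / k ^ 2 /\ g t = exp (- k * (t - t0)).
Proof.
  intros Ht. assert (Hw := transition_width).
  unfold acoef, g. rewrite !glue_right by lra. split.
  - unfold q. destruct (ylog_after_t0 t Ht) as (-> & ->). field. lra.
  - f_equal. unfold logg. rewrite (RInt_ext ylog (fun _ => k)).
    + rewrite RInt_const. unfold scal; simpl. unfold mult; simpl. ring.
    + intros s Hs. rewrite Rmin_left in Hs by lra. apply ylog_after_t0. lra.
Qed.

Lemma rhs_ylog_bounds t : 0 <= rhs_ylog t <= 4 * k.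
Proof.
  rewrite <- (Rinv_inv (4 * k)), <- ric_b_eq.
  apply riccati_rhs_bounds; [apply ric_a_pos | apply ric_b_pos].
Qed.

Lemma q_bounds t : - w ^ 2 <= q t <= k ^ 2.
Proof.
  assert (Hd := dramp_bounds t_ramp ramp_len ramp_len_pos t). fold (dphi t) in Hd.
  assert (Hr := rhs_ylog_bounds t). assert (Hq := riccati_rhs_le (ylog t)). fold (rhs_ylog t) in Hq.
  assert (Hy0 := ylog_pos t). assert (Hyk := ylog_le_k t).
  assert (ylog t ^ 2 <= k ^ 2) by (apply pow_incr; lra).
  unfold q. split; nra.
Qed.

Lemma acoef_bounds t : mu / (2 * k ^ 2) <= acoef t <= 1 + mu / k ^ 2.
Proof.
  assert (Hk2 : 0 < k ^ 2) by (apply pow_lt; lra).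
  assert (mu / (2 * k ^ 2) <= mu / k ^ 2).
  { unfold Rdiv. apply Rmult_le_compat_l; [lra|]. apply Rinv_le_contravar; lra. }
  unfold acoef, glue. destruct (Rle_dec t tau); [lra|].
  destruct (q_bounds t) as (Q1 & Q2). rewrite (omega_sq mu Hmu) in Q1.
  replace (mu / (2 * k ^ 2)) with ((- (mu / 2) + mu) / k ^ 2) by (field; lra).
  replace (1 + mu / k ^ 2) with ((k ^ 2 + mu) / k ^ 2) by (field; lra).
  split; apply Rmult_le_compat_r; try (apply Rlt_le, Rinv_0_lt_compat); lra.
Qed.

(* After [tau], [ylog >= ystar >= 10] makes [riccati_drhs * riccati_rhs <= 8 k^2 / 10]. *)
Lemma dq_bound t : tau < t -> Rabs (dq t) <= 8 * k ^ 2 + 8 * k ^ 2 / 10 + 60 * k.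
Proof.
  intros Ht.
  assert (Hy0 := ylog_pos t). assert (Hyk := ylog_le_k t).
  assert (Hy10 : 10 <= ylog t) by (assert (H := ystar_le_ylog t); assert (H10 := ystar_ge_10); lra).
  assert (HD := dramp_bounds t_ramp ramp_len ramp_len_pos t). fold (dphi t) in HD.
  assert (HDD := ddramp_bound t_ramp ramp_len ramp_len_pos t). fold (ddphi t) in HDD.
  replace (3 / (2 * ramp_len)) with 15 in HDD by (unfold ramp_len; field).
  assert (HR := rhs_ylog_bounds t).
  assert (HS := riccati_drhs_rhs_bound _ _ ric_a_pos ric_b_pos _ Hy0). fold (rhs_ylog t) in HS.
  replace (/ (2 * rb ^ 2 * ylog t)) with (8 * k ^ 2 / ylog t) in HS
    by (rewrite ric_b_eq; field; split; lra).
  assert (8 * k ^ 2 / ylog t <= 8 * k ^ 2 / 10).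
  { unfold Rdiv. apply Rmult_le_compat_l; [nra|]. apply Rinv_le_contravar; lra. }
  unfold dq. set (y := ylog t) in *. set (d := dphi t) in *. set (dd := ddphi t) in *.
  set (r := rhs_ylog t) in *. set (D := riccati_drhs ra rb y) in *.
  assert (T1 : 0 <= 2 * y * (d * r) <= 8 * k ^ 2).
  { assert (0 <= d * r <= 4 * k) by (split; nra). split; nra. }
  assert (T2 : 0 <= d * r * D * d <= 8 * k ^ 2 / 10).
  { replace (d * r * D * d) with ((d * d) * (D * r)) by ring.
    assert (0 <= d * d <= 1) by (split; nra). split; nra. }
  assert (T3 : Rabs (r * dd) <= 60 * k).
  { rewrite Rabs_mult, (Rabs_pos_eq r) by lra.
    apply Rle_trans with (4 * k * 15); [apply Rmult_le_compat; try lra; apply Rabs_pos | lra]. }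
  replace (2 * y * (d * r) - (d * r * D * d + r * dd))
    with ((2 * y * (d * r) - d * r * D * d) + - (r * dd)) by ring.
  apply Rle_trans with (1 := Rabs_triang _ _). rewrite Rabs_Ropp.
  assert (Rabs (2 * y * (d * r) - d * r * D * d) <= 8 * k ^ 2 + 8 * k ^ 2 / 10)
    by (apply Rabs_le; lra).
  lra.
Qed.

Lemma dacoef_bound t : Rabs (dacoef t) <= 10.
Proof.
  assert (Hk2 : 0 < k ^ 2) by (apply pow_lt; lra).
  unfold dacoef, glue. destruct (Rle_dec t tau); [rewrite Rabs_R0; lra|].
  assert (H := dq_bound t (Rnot_le_lt _ _ n)).
  unfold Rdiv. rewrite Rabs_mult, (Rabs_pos_eq (/ k ^ 2)) by (apply Rlt_le, Rinv_0_lt_compat; auto).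
  apply Rmult_le_reg_r with (k ^ 2); auto. rewrite Rmult_assoc, Rinv_l by lra.
  assert (60 * k <= 12 / 10 * k ^ 2) by nra. lra.
Qed.

Lemma Derive_g : Derive g = dg.
Proof. apply functional_extensionality; intro t. apply is_derive_unique, is_derive_g. Qed.

Lemma Derive_dg : Derive dg = ddg.
Proof. apply functional_extensionality; intro t. apply is_derive_unique, is_derive_dg. Qed.

Lemma Derive_acoef : Derive acoef = dacoef.
Proof. apply functional_extensionality; intro t. apply is_derive_unique, is_derive_acoef. Qed.

Lemma C1_1_g : C1_1 g.
Proof.
  apply (C1_1_of_derive _ dg); [apply is_derive_g|].
  intros t. eapply is_derive_continuous, is_derive_dg.
Qed.

Lemma C1_1_Derive_g : C1_1 (Derive g).
Proof. rewrite Derive_g. exact (C1_1_of_derive _ ddg is_derive_dg continuous_ddg). Qed.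

Lemma C1_1_acoef : C1_1 acoef.
Proof. exact (C1_1_of_derive _ dacoef is_derive_acoef continuous_dacoef). Qed.

Lemma C2_1_g : C2_1 g.
Proof.
  split; intros t.
  - change (ex_derive (Derive g) t). rewrite Derive_g. exists (ddg t). apply is_derive_dg.
  - change (continuity_pt (Derive (Derive g)) t). rewrite Derive_g, Derive_dg.
    apply continuity_pt_filterlim, continuous_ddg.
Qed.

Lemma Derive_g_0 : Derive g 0 = 0.
Proof.
  rewrite Derive_g. unfold dg. rewrite glue_left by (assert (H := tau_pos); lra).
  rewrite Rmult_0_r, sin_0. ring.
Qed.

Lemma reg_class_transition :
  reg_class (5 * k ^ 2 / mu) 10 (diag_t acoef (1 + mu / (4 * k ^ 2))).
Proof.
  assert (Hk2 : 0 < k ^ 2) by (apply pow_lt; lra).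
  assert (HL : / (5 * k ^ 2 / mu) = mu / (5 * k ^ 2)) by (field; split; lra).
  assert (Q1 : mu / (5 * k ^ 2) <= mu / (4 * k ^ 2) <= mu / (2 * k ^ 2)).
  { split; unfold Rdiv; apply Rmult_le_compat_l; try lra; apply Rinv_le_contravar; lra. }
  assert (Q2 : mu / k ^ 2 <= 1).
  { apply Rmult_le_reg_r with (k ^ 2); auto. unfold Rdiv. rewrite Rmult_assoc, Rinv_l; lra. }
  assert (Q3 : 2 <= 5 * k ^ 2 / mu).
  { apply Rmult_le_reg_r with mu; auto. unfold Rdiv. rewrite Rmult_assoc, Rinv_l; lra. }
  assert (0 <= mu / (4 * k ^ 2) <= mu / k ^ 2).
  { split; [apply Rdiv_le_0_compat; lra|].
    unfold Rdiv. apply Rmult_le_compat_l; [lra|]. apply Rinv_le_contravar; lra. }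
  apply reg_class_diag_t; [apply C1_1_acoef | | | | lra].
  - intros t. assert (Ha := acoef_bounds t). rewrite HL. lra.
  - rewrite HL. lra.
  - rewrite Derive_acoef. apply dacoef_bound.
Qed.

Lemma solves_at_transition (b : R) x y t :
  solves_at mu (diag_t acoef b) (sepfun (fun x => cos (k * x)) g) x y t.
Proof. apply solves_at_cos_diag_t. rewrite Derive_g, Derive_dg. apply g_ode. Qed.

Lemma solves_at_before_tau (b : R) x y t : t <= tau ->
  solves_at mu (diagmat (mu / (2 * k ^ 2)) b) (sepfun (fun x => cos (k * x)) g) x y t.
Proof.
  intros Ht. apply (solves_at_cos_diag_t mu k (fun _ => mu / (2 * k ^ 2))).
  rewrite Derive_g, Derive_dg, g_ode, (proj1 (before_tau t Ht)). reflexivity.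
Qed.

End Construction.

Theorem mainTheorem6 (mu : R) (Hmu : 0 < mu) :
  exists K : nat, forall k : nat, (K <= k)%nat ->
  let kr := INR k in
  let A1 := diagmat (mu / (2 * kr ^ 2)) (1 + mu / (4 * kr ^ 2)) in
  let A2 := diagmat (1 + mu / kr ^ 2) (1 + mu / (4 * kr ^ 2)) in
  exists (f : R -> R) (C t0 : R),
    C2_1 f /\ Derive f 0 = 0 /\
    0 < C /\ C <= 2 / 5 /\ t0 - C > 0 /\
    let u1 : fn3 := fun x y t => cos (kr * x) * f t in
    let u2 : fn3 := fun x y t => cos (kr * x) * exp (- kr * (t - t0)) in
    (* (i) *)
    (forall x y t, t <= t0 - C -> solves_at mu A1 u1 x y t) /\
    (* (ii) *)
    (forall x y t, solves_at mu A2 u2 x y t) /\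
    exists (u : fn3) (A : matfn),
      C2_3 u /\ periodic2 u /\ (forall i j, periodic2 (A i j)) /\
      reg_class (5 * kr ^ 2 / mu) 10 A /\
      (forall x y t, solves_at mu A u x y t) /\
      (forall x y t, t <= t0 - C ->
         u x y t = u1 x y t /\ forall i j, A i j x y t = A1 i j x y t) /\
      (forall x y t, t0 <= t ->
         u x y t = u2 x y t /\ forall i j, A i j x y t = A2 i j x y t).
Proof.
  destruct (admissible_eventually mu Hmu) as [K HK]. exists K.
  intros k Hk kr A1 A2. assert (Hadm : admissible mu kr) by apply (HK k Hk).
  assert (Hkr : 0 < kr) by (destruct Hadm as (_ & _ & ? & _); lra).
  assert (Htau := tau_pos mu kr Hadm). assert (HC := transition_width mu kr Hadm).
  exists (g mu kr), (t0 mu kr - tau mu kr), (t0 mu kr).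
  replace (t0 mu kr - (t0 mu kr - tau mu kr)) with (tau mu kr) by ring.
  split; [apply C2_1_g; auto|]. split; [apply Derive_g_0; auto|].
  split; [lra|]. split; [lra|]. split; [lra|].
  intros u1 u2. split; [|split].
  - intros x y t Ht. apply (solves_at_before_tau mu kr Hadm _ x y t Ht).
  - intros x y t. apply solves_at_cos_diag_t. rewrite Derive2_exp_decay. field. lra.
  - exists (sepfun (fun x => cos (kr * x)) (g mu kr)),
      (diag_t (acoef mu kr) (1 + mu / (4 * kr ^ 2))).
    split; [apply C2_3_sepfun;
            auto using C1_1_cos_scal, C1_1_Derive_cos_scal, C1_1_g, C1_1_Derive_g|].
    split; [apply periodic2_sepfun_cos|]. split; [apply periodic2_diag_t|].
    split; [apply reg_class_transition; auto|].
    split; [intros x y t; apply solves_at_transition; auto|].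
    split; intros x y t Ht.
    + destruct (before_tau mu kr t Ht) as (Ha & _).
      split; [reflexivity|]. intros [] []; simpl; auto.
    + destruct (after_t0 mu kr Hadm t Ht) as (Ha & Hg).
      split; [unfold sepfun, u2; rewrite Hg; reflexivity|]. intros [] []; simpl; auto.
Qed.
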